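(* Let $K \ge 1$ be an integer and let $\Phi \in \mathbb{R}^{M \times N}$ satisfy the restricted isometry property of order $K+1$ with isometry constant $\delta < \frac{1}{3}$. Let $x \in \mathbb{R}^N$ with $\|x\|_0 \le K$, and let $x'(1), x'(2), \dots$ denote the entries of $x$ ordered by magnitude, $|x'(1)| \ge |x'(2)| \ge \cdots \ge |x'(K)| \ge 0$, with $x'(K+1) = \cdots = x'(N) = 0$. Suppose that for all $j \in \{1, 2, \dots, K-1\}$, $$\frac{|x'(j)|}{|x'(j+1)|} \ge \alpha, \qquad\text{where}\qquad \alpha > \frac{1 + 2\frac{\delta}{1-\delta}\sqrt{K-1}}{1 - 2\frac{\delta}{1-\delta}}.$$ Then Orthogonal Matching Pursuit applied to $\Phi$ and $y = \Phi x$ recovers $x$ exactly in $K$ iterations, i.e. $x^K = x$.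
   Context: For $x \in \mathbb{R}^N$, $\|x\|_0 := |\mathrm{supp}(x)|$ is the number of nonzero entries. A matrix $\Phi \in \mathbb{R}^{M\times N}$ satisfies the restricted isometry property (RIP) of order $K$ with isometry constant $\delta \in (0,1)$ if $(1-\delta)\|x\|_2^2 \le \|\Phi x\|_2^2 \le (1+\delta)\|x\|_2^2$ for all $x \in \mathbb{R}^N$ with $\|x\|_0 \le K$. Orthogonal Matching Pursuit (OMP) with input $\Phi$ and $y \in \mathbb{R}^M$: initialize $r^0 = y$, $x^0 = 0$, $\Lambda^0 = \emptyset$, $\ell = 0$. Each iteration: compute $h^\ell = \Phi^T r^\ell$; set $\Lambda^{\ell+1} = \Lambda^\ell \cup \{j^*\}$ where $j^*$ is an index maximizing $|h^\ell(j)|$ (if several maxima exist, exactly one is chosen); set $x^{\ell+1} = \arg\min_{z:\, \mathrm{supp}(z) \subseteq \Lambda^{\ell+1}} \|y - \Phi z\|_2$ and $r^{\ell+1} = y - \Phi x^{\ell+1}$; increment $\ell$. The output after $\ell$ iterations is $x^\ell$. *)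

From HB Require Import structures.
From mathcomp Require Import all_boot all_order all_algebra.
From mathcomp Require Import reals.
Set Implicit Arguments. Unset Strict Implicit. Unset Printing Implicit Defensive.
Import Order.TTheory GRing.Theory Num.Theory.
Local Open Scope ring_scope.

Section OMPDefs.
Variable R : realType.

Definition sqnorm n (v : 'cV[R]_n) : R := \sum_(i < n) (v i 0) ^+ 2.

Definition supp n (v : 'cV[R]_n) : {set 'I_n} := [set i | v i 0 != 0].
Definition l0 n (v : 'cV[R]_n) : nat := #|supp v|.

Definition RIP m n (Phi : 'M[R]_(m, n)) (K : nat) (delta : R) : Prop :=
  0 < delta < 1 /\
  forall v : 'cV[R]_n, (l0 v <= K)%N ->
    (1 - delta) * sqnorm v <= sqnorm (Phi *m v) /\
    sqnorm (Phi *m v) <= (1 + delta) * sqnorm v.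

Definition ls_sol m n (Phi : 'M[R]_(m, n)) (y : 'cV[R]_m) (Lam : {set 'I_n})
    (z : 'cV[R]_n) : Prop :=
  supp z \subset Lam /\
  forall w : 'cV[R]_n, supp w \subset Lam ->
    sqnorm (y - Phi *m z) <= sqnorm (y - Phi *m w).

(* (Lam, xs) is a valid run of OMP with input Phi, y for the first L
   iterations: Lam l = Lambda^l, xs l = x^l, residual r^l = y - Phi x^l. *)
Definition omp_run m n (Phi : 'M[R]_(m, n)) (y : 'cV[R]_m)
    (L : nat) (Lam : nat -> {set 'I_n}) (xs : nat -> 'cV[R]_n) : Prop :=
  Lam 0%N = set0 /\ xs 0%N = 0 /\
  forall l, (l < L)%N ->
    let h := Phi^T *m (y - Phi *m xs l) in
    exists j : 'I_n,
      (forall k : 'I_n, `|h k 0| <= `|h j 0|) /\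
      Lam l.+1 = j |: Lam l /\
      ls_sol Phi y (Lam l.+1) (xs l.+1).

(* magnitudes of the entries of x in nonincreasing order:
   mag_sorted x j = |x'(j+1)| (0-based index j) *)
Definition mag_sorted n (v : 'cV[R]_n) (j : nat) : R :=
  nth 0 (sort (fun a b : R => b <= a) [seq `|v i 0| | i <- enum 'I_n]) j.

End OMPDefs.

From HB Require Import structures.
From mathcomp Require Import all_boot all_order all_algebra.
From mathcomp Require Import reals.
From mathcomp Require Import ring lra zify.
Import Order.TTheory GRing.Theory Num.Theory.
Local Open Scope ring_scope.
Set Implicit Arguments. Unset Strict Implicit. Unset Printing Implicit Defensive.

(* OMP selects, at every step, the largest entry of x that is not selected yet.
   Let L hold the l largest entries of x and let z be the least-squares fit on L,
   so that the residual is orthogonal to Phi restricted to L.  Split u = x - z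
   into its part q on L and its part r off L; orthogonality and the RIP give
   |q| <= delta / (1 - delta) |r|.  The correlation h = Phi^T Phi u vanishes on L
   and differs entrywise from u by at most delta |u| <= delta / (1 - delta) |r|.
   If x_j is the largest remaining entry, the decay hypothesis bounds the other
   remaining entries by |x_j| / alpha, hence |r| <= |x_j| (1 + sqrt (K - 1) / alpha),
   and the condition on alpha makes twice the error smaller than the gap
   |x_j| - |x_j| / alpha.  So h peaks at j.  After K steps the support of x is
   selected, and by the RIP the least-squares fit is x itself. *)

Section MagSorted.
Variables (R : realType) (n : nat) (v : 'cV[R]_n).

Let geR (a b : R) := b <= a.
Let mags := sort geR [seq `|v i 0| | i <- enum 'I_n].

Let mags_sorted : sorted geR mags.
Proof. by apply: sort_sorted => a b; apply: le_total. Qed.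

Let size_mags : size mags = n.
Proof. by rewrite /mags size_sort size_map size_enum_ord. Qed.

Let mags_leq_nth i j : (i < n)%N -> (j < n)%N -> (i <= j)%N ->
  nth 0 mags j <= nth 0 mags i.
Proof.
have geR_trans : transitive geR by move=> b a c ba cb; apply: le_trans cb ba.
have geR_refl : reflexive geR by move=> a; apply: lexx.
move=> ? ? ?; apply: (sorted_leq_nth geR_trans geR_refl 0 mags_sorted) => //;
  by rewrite inE size_mags.
Qed.

Let card_mag_count (p : pred R) : #|[set i | p `|v i 0|]| = count p mags.
Proof.
rewrite /mags (permP (permEl (perm_sort _ _))) count_map cardsE cardE /enum_mem size_filter.
by rewrite count_filter; apply: eq_count => i; rewrite !inE andbT.
Qed.

Lemma mag_sorted_default j : (n <= j)%N -> mag_sorted v j = 0.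
Proof. by move=> hj; rewrite /mag_sorted nth_default // size_mags. Qed.

Lemma card_ge_mag_sorted j : (j < n)%N ->
  (j < #|[set i | (mag_sorted v j <= `|v i 0|)%R]|)%N.
Proof.
move=> hj; rewrite card_mag_count -(cat_take_drop j.+1 mags) count_cat.
apply: leq_trans (leq_addr _ _).
have -> : count (fun a => mag_sorted v j <= a) (take j.+1 mags) = size (take j.+1 mags).
  apply/eqP; rewrite -all_count; apply/(all_nthP 0) => k.
  rewrite size_take size_mags => hk; rewrite nth_take; last by move: hk; case: ifP; lia.
  by apply: mags_leq_nth; move: hk; case: ifP; lia.
by rewrite size_take size_mags; case: ifP; lia.
Qed.

Lemma card_gt_mag_sorted j : (#|[set i | (mag_sorted v j < `|v i 0|)%R]| <= j)%N.
Proof.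
rewrite card_mag_count -(cat_take_drop j mags) count_cat.
have -> : count (fun a => mag_sorted v j < a) (drop j mags) = 0%N.
  apply/eqP; rewrite -leqn0 leqNgt -has_count; apply/(has_nthP 0) => -[k].
  rewrite size_drop size_mags nth_drop => hk; apply/negP; rewrite -leNgt.
  by apply: mags_leq_nth; lia.
by rewrite addn0 (leq_trans (count_size _ _)) // size_take; case: ifP; lia.
Qed.

Lemma mag_sorted_card_le (A : {set 'I_n}) (a : R) : 0 <= a ->
  (forall i, i \notin A -> `|v i 0| <= a) -> mag_sorted v #|A| <= a.
Proof.
move=> a_ge0 le_a; case: (ltnP #|A| n) => [hA|hA]; last by rewrite mag_sorted_default.
rewrite leNgt; apply/negP => lt_a.
have : [set i | mag_sorted v #|A| <= `|v i 0|] \subset A.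
  apply/subsetP => i; rewrite inE; apply: contraTT => iA.
  by rewrite -ltNge (le_lt_trans (le_a i iA)).
by move/subset_leq_card; rewrite leqNgt card_ge_mag_sorted.
Qed.

Lemma abs_le_mag_sorted_card (A : {set 'I_n}) k : k \notin A ->
  (forall i, i \in A -> `|v k 0| <= `|v i 0|) -> `|v k 0| <= mag_sorted v #|A|.
Proof.
move=> kA le_k; rewrite leNgt; apply/negP => lt_k.
have : k |: A \subset [set i | mag_sorted v #|A| < `|v i 0|].
  apply/subsetP => i; rewrite !inE => /predU1P[->|iA] //.
  exact: lt_le_trans lt_k (le_k i iA).
move/subset_leq_card; rewrite cardsU1 kA add1n.
by move/leq_trans/(_ (card_gt_mag_sorted _)); rewrite ltnn.
Qed.

End MagSorted.

Section Euclid.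
Variables (R : realType) (n : nat).
Implicit Types (a b c v : 'cV[R]_n) (A B : {set 'I_n}).

Definition dot a b : R := \sum_(i < n) a i 0 * b i 0.

Definition norm2 a : R := Num.sqrt (sqnorm a).

Lemma dotC a b : dot a b = dot b a.
Proof. by apply: eq_bigr => i _; rewrite mulrC. Qed.

Lemma dotDl a b c : dot (a + b) c = dot a c + dot b c.
Proof. by rewrite /dot -big_split; apply: eq_bigr => i _; rewrite !mxE mulrDl. Qed.

Lemma dotNl a c : dot (- a) c = - dot a c.
Proof. by rewrite /dot -sumrN; apply: eq_bigr => i _; rewrite !mxE mulNr. Qed.

Lemma dotZl t a c : dot (t *: a) c = t * dot a c.
Proof. by rewrite /dot mulr_sumr; apply: eq_bigr => i _; rewrite !mxE mulrA. Qed.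

Lemma dotBl a b c : dot (a - b) c = dot a c - dot b c.
Proof. by rewrite dotDl dotNl. Qed.

Lemma dotDr a b c : dot c (a + b) = dot c a + dot c b.
Proof. by rewrite dotC dotDl !(dotC c). Qed.

Lemma dotBr a b c : dot c (a - b) = dot c a - dot c b.
Proof. by rewrite dotC dotBl !(dotC c). Qed.

Lemma dotZr t a c : dot c (t *: a) = t * dot c a.
Proof. by rewrite dotC dotZl dotC. Qed.

Lemma dot0l c : dot 0 c = 0.
Proof. by rewrite /dot big1 // => i _; rewrite mxE mul0r. Qed.

Lemma dot0r c : dot c 0 = 0.
Proof. by rewrite dotC dot0l. Qed.

Lemma dot_delta_mx k c : dot (delta_mx k 0) c = c k 0.
Proof.
rewrite /dot (bigD1 k) //= big1 ?addr0; first by rewrite mxE !eqxx mul1r.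
by move=> i /negbTE ik; rewrite mxE ik mul0r.
Qed.

Lemma sqnormE a : sqnorm a = dot a a.
Proof. by apply: eq_bigr => i _; rewrite expr2. Qed.

Lemma sqnormD a b : sqnorm (a + b) = sqnorm a + 2 * dot a b + sqnorm b.
Proof. by rewrite !sqnormE !dotDl !dotDr (dotC b a); ring. Qed.

Lemma sqnormB a b : sqnorm (a - b) = sqnorm a - 2 * dot a b + sqnorm b.
Proof. by rewrite !sqnormE !dotBl !dotBr (dotC b a); ring. Qed.

Lemma sqnormZ t a : sqnorm (t *: a) = t ^+ 2 * sqnorm a.
Proof. by rewrite !sqnormE dotZl dotZr mulrA -expr2. Qed.

Lemma sqnorm_ge0 a : 0 <= sqnorm a.
Proof. by apply: sumr_ge0 => i _; apply: sqr_ge0. Qed.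

Lemma sqnorm_eq0 a : (sqnorm a == 0) = (a == 0).
Proof.
apply/idP/eqP => [|->]; last by rewrite /sqnorm big1 // => i _; rewrite mxE expr0n.
rewrite psumr_eq0; last by move=> i _; apply: sqr_ge0.
move=> /allP a0; apply/matrixP => i j; rewrite (ord1 j) mxE.
by apply/eqP; rewrite -sqrf_eq0; apply: a0; rewrite mem_index_enum.
Qed.

Lemma sqnorm_delta_mx k : sqnorm (delta_mx k 0 : 'cV[R]_n) = 1.
Proof. by rewrite sqnormE dot_delta_mx mxE !eqxx. Qed.

Lemma norm2_ge0 a : 0 <= norm2 a.
Proof. exact: sqrtr_ge0. Qed.

Lemma sqr_norm2 a : norm2 a ^+ 2 = sqnorm a.
Proof. by rewrite sqr_sqrtr // sqnorm_ge0. Qed.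

Lemma norm2_eq0 a : (norm2 a == 0) = (a == 0).
Proof. by rewrite sqrtr_eq0 le_eqVlt ltNge sqnorm_ge0 orbF sqnorm_eq0. Qed.

Lemma supp_subP a A : reflect (forall i, i \notin A -> a i 0 = 0) (supp a \subset A).
Proof.
apply: (iffP subsetP) => h i.
  by move=> iA; apply/eqP; apply: contraNT iA => ai; apply: h; rewrite inE.
by rewrite inE; apply: contraR => iA; rewrite h.
Qed.

Lemma supp_subD a b A : supp a \subset A -> supp b \subset A -> supp (a + b) \subset A.
Proof.
by move=> /supp_subP a0 /supp_subP b0; apply/supp_subP => i iA; rewrite mxE a0 ?b0 ?addr0.
Qed.

Lemma supp_subB a b A : supp a \subset A -> supp b \subset A -> supp (a - b) \subset A.
Proof.
move=> ? /supp_subP b0; apply: supp_subD => //.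
by apply/supp_subP => i iA; rewrite mxE b0 ?oppr0.
Qed.

Lemma supp_subZ t a A : supp a \subset A -> supp (t *: a) \subset A.
Proof. by move=> /supp_subP a0; apply/supp_subP => i iA; rewrite mxE a0 ?mulr0. Qed.

Lemma supp_delta_mx k : supp (delta_mx k 0 : 'cV[R]_n) \subset [set k].
Proof. by apply/supp_subP => i; rewrite inE mxE eqxx andbT => /negbTE ->. Qed.

Definition restrict A a : 'cV[R]_n := \col_(i < n) (if i \in A then a i 0 else 0).

Lemma supp_restrict A a : supp (restrict A a) \subset A.
Proof. by apply/supp_subP => i /negbTE iA; rewrite mxE iA. Qed.

Lemma supp_restrict_sub A B a : supp a \subset B -> supp (restrict A a) \subset B.
Proof. by move=> /supp_subP a0; apply/supp_subP => i iB; rewrite mxE a0 ?if_same. Qed.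

Lemma restrictCK A a : restrict A a + restrict (~: A) a = a.
Proof.
by apply/matrixP => i j; rewrite (ord1 j) !mxE inE; case: (i \in A); rewrite ?addr0 ?add0r.
Qed.

Lemma dot_restrictC A a b : dot (restrict A a) (restrict (~: A) b) = 0.
Proof.
by rewrite /dot big1 // => i _; rewrite !mxE inE; case: (i \in A); rewrite ?mulr0 ?mul0r.
Qed.

Lemma restrict_eq A a b : (forall i, i \in A -> a i 0 = b i 0) -> restrict A a = restrict A b.
Proof. by move=> ab; apply/matrixP => i j; rewrite !mxE; case: ifP => // /ab. Qed.

Lemma sqnorm_le_peak v A j (b : R) :
  supp v \subset A -> (forall i, i != j -> `|v i 0| <= b) ->
  sqnorm v <= v j 0 ^+ 2 + #|A :\ j|%:R * b ^+ 2.
Proof.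
move=> /supp_subP vA le_b; rewrite /sqnorm (bigD1 j) //= lerD2l.
rewrite (bigID (mem A)) /= [X in _ + X]big1 ?addr0; last first.
  by move=> i /andP[_ /vA ->]; rewrite expr0n.
rewrite (eq_bigl (mem (A :\ j))) => [|i]; last by rewrite !inE andbC.
apply: le_trans (_ : \sum_(i in A :\ j) b ^+ 2 <= _); last by rewrite sumr_const mulr_natl.
apply: ler_sum => i; rewrite !inE => /andP[ij _].
rewrite -real_normK ?num_real // ler_sqr ?nnegrE ?le_b //.
exact: le_trans (normr_ge0 _) (le_b i ij).
Qed.

End Euclid.

Lemma dot_mulmx (R : realType) m n (Phi : 'M[R]_(m, n)) a b :
  dot (Phi *m a) b = dot a (Phi^T *m b).
Proof.
rewrite /dot; under eq_bigr do rewrite mxE mulr_suml.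
rewrite exchange_big /=; apply: eq_bigr => j _.
by rewrite mxE mulr_sumr; apply: eq_bigr => i _; rewrite !mxE mulrCA mulrA.
Qed.

Section RestrictedIsometry.
Variables (R : realType) (m n s : nat) (Phi : 'M[R]_(m, n)) (d : R).
Hypothesis Phi_rip : RIP Phi s d.
Implicit Types (a b : 'cV[R]_n) (A : {set 'I_n}).

Lemma rip_gt0 : 0 < d.
Proof. by case: Phi_rip => /andP[]. Qed.

Lemma rip_lt1 : d < 1.
Proof. by case: Phi_rip => /andP[]. Qed.

Lemma rip_lower a A : supp a \subset A -> (#|A| <= s)%N ->
  (1 - d) * sqnorm a <= sqnorm (Phi *m a).
Proof.
move=> aA cardA; case: Phi_rip => _ /(_ a) [] //.
exact: leq_trans (subset_leq_card aA) cardA.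
Qed.

Lemma rip_upper a A : supp a \subset A -> (#|A| <= s)%N ->
  sqnorm (Phi *m a) <= (1 + d) * sqnorm a.
Proof.
move=> aA cardA; case: Phi_rip => _ /(_ a) [] //.
exact: leq_trans (subset_leq_card aA) cardA.
Qed.

Lemma rip_dot_le_mean a b A : (#|A| <= s)%N -> supp a \subset A -> supp b \subset A ->
  `|dot (Phi *m a) (Phi *m b) - dot a b| <= d * (sqnorm a + sqnorm b) / 2.
Proof.
move=> cardA aA bA.
have := rip_lower (supp_subD aA bA) cardA; have := rip_upper (supp_subD aA bA) cardA.
have := rip_lower (supp_subB aA bA) cardA; have := rip_upper (supp_subB aA bA) cardA.
rewrite mulmxBr mulmxDr !sqnormB !sqnormD.
move: (sqnorm a) (sqnorm b) (dot a b) (sqnorm (Phi *m a)) (sqnorm (Phi *m b))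
  (dot (Phi *m a) (Phi *m b)) => ? ? ? ? ? ? ? ? ? ?.
by rewrite ler_norml; apply/andP; split; nra.
Qed.

Lemma rip_dot_le a b A : (#|A| <= s)%N -> supp a \subset A -> supp b \subset A ->
  `|dot (Phi *m a) (Phi *m b) - dot a b| <= d * norm2 a * norm2 b.
Proof.
move=> cardA aA bA.
have rhs_ge0 (u v : 'cV[R]_n) : 0 <= d * norm2 u * norm2 v.
  by rewrite !mulr_ge0 ?norm2_ge0 ?(ltW rip_gt0).
have [a0|a0] := eqVneq a 0; first by rewrite a0 mulmx0 !dot0l subrr normr0 rhs_ge0.
have [b0|b0] := eqVneq b 0; first by rewrite b0 mulmx0 !dot0r subrr normr0 rhs_ge0.
have na : 0 < norm2 a by rewrite lt_def norm2_eq0 a0 norm2_ge0.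
have nb : 0 < norm2 b by rewrite lt_def norm2_eq0 b0 norm2_ge0.
have := rip_dot_le_mean cardA (supp_subZ (norm2 a)^-1 aA) (supp_subZ (norm2 b)^-1 bA).
rewrite -!scalemxAr !dotZl !dotZr !sqnormZ -!sqr_norm2 !exprVn !mulVf ?sqrf_eq0 ?gt_eqF //.
rewrite !mulrA -mulrBr normrM gtr0_norm ?mulr_gt0 ?invr_gt0 //.
move: `|_| => X h.
have -> : X = norm2 a * norm2 b * ((norm2 a)^-1 * (norm2 b)^-1 * X).
  by field; rewrite !gt_eqF.
have -> : d * norm2 a * norm2 b = norm2 a * norm2 b * d by ring.
by rewrite ler_pM2l ?mulr_gt0 //; lra.
Qed.

Lemma rip_mulmx_eq0 a A : supp a \subset A -> (#|A| <= s)%N -> Phi *m a = 0 -> a = 0.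
Proof.
move=> aA cardA Pa0; have := rip_lower aA cardA; rewrite Pa0.
have d1 := rip_lt1; have a_ge0 := sqnorm_ge0 a.
have -> : sqnorm (0 : 'cV[R]_m) = 0 by apply/eqP; rewrite sqnorm_eq0.
by move=> h; apply/eqP; rewrite -sqnorm_eq0 eq_le a_ge0 andbT; nra.
Qed.

Lemma rip_gram_entry u A k : supp u \subset A -> (#|k |: A| <= s)%N ->
  `|(Phi^T *m (Phi *m u)) k 0 - u k 0| <= d * norm2 u.
Proof.
move=> uA cardkA.
have ekA : supp (delta_mx k 0 : 'cV[R]_n) \subset k |: A.
  by apply: subset_trans (supp_delta_mx _ k) _; rewrite sub1set setU11.
have := rip_dot_le cardkA ekA (subset_trans uA (subsetUr _ _)).
by rewrite dot_mulmx !dot_delta_mx /norm2 sqnorm_delta_mx sqrtr1 mulr1.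
Qed.

Lemma rip_orth_split q r A : (#|A| <= s)%N -> supp q \subset A -> supp r \subset A ->
  dot q r = 0 -> dot (Phi *m q) (Phi *m (q + r)) = 0 -> norm2 q <= d / (1 - d) * norm2 r.
Proof.
move=> cardA qA rA qr0; rewrite mulmxDr dotDr -sqnormE => orth.
have := rip_lower qA cardA; have := rip_dot_le cardA qA rA.
rewrite qr0 subr0 -sqr_norm2; have d0 := rip_gt0; have d1 := rip_lt1.
have q0 := norm2_ge0 q; have r0 := norm2_ge0 r.
move: orth; move: (dot _ _) (sqnorm _) (norm2 q) (norm2 r) q0 r0 => D S Q Rn q0 r0 orth hD hS.
have {}hD : - D <= d * Q * Rn by move: hD; rewrite ler_norml => /andP[? _]; lra.
have key : (1 - d) * Q <= d * Rn.
  have [->|Q0] := eqVneq Q 0; first by rewrite mulr0 mulr_ge0 //; lra.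
  have Qgt0 : 0 < Q by rewrite lt_def Q0.
  by rewrite -(ler_pM2r Qgt0); nra.
by rewrite mulrAC ler_pdivlMr ?subr_gt0 // mulrC.
Qed.

End RestrictedIsometry.

Lemma ls_sol_orth (R : realType) m n (Phi : 'M[R]_(m, n)) y L z w :
  ls_sol Phi y L z -> supp w \subset L -> dot (Phi *m w) (y - Phi *m z) = 0.
Proof.
move=> [zL zmin] wL.
set D := dot _ _; set S := sqnorm (Phi *m w); set t := D / (S + 1).
have S0 : 0 <= S by apply: sqnorm_ge0.
have tD : t * (S + 1) = D by rewrite /t divfK //; apply: lt0r_neq0; lra.
have := zmin (z + t *: w) (supp_subD zL (supp_subZ t wL)).
rewrite mulmxDr -scalemxAr opprD addrA (sqnormB (y - Phi *m z)) dotZr sqnormZ -/S.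
rewrite (dotC (y - _)) -/D -tD => h.
have t0 : t ^+ 2 <= 0 by nra.
by rewrite (_ : t = 0) ?mul0r //; apply/eqP; rewrite -sqrf_eq0 eq_le t0 sqr_ge0.
Qed.

Lemma mulr_sqrt_sumsqr_le (R : rcfType) (d q r : R) : 0 < d < 1 -> 0 <= q ->
  q <= d / (1 - d) * r -> d * Num.sqrt (q ^+ 2 + r ^+ 2) <= d / (1 - d) * r.
Proof.
move=> /andP[d0 d1] q0 qr; set e := d / (1 - d) in qr *.
have e0 : 0 < e by rewrite divr_gt0 // subr_gt0.
have ed : e * (1 - d) = d by rewrite divfK // subr_eq0 gt_eqF.
have r0 : 0 <= r by rewrite -(pmulr_rge0 _ e0); apply: le_trans qr.
have er0 : 0 <= e * r by rewrite mulr_ge0 // ltW.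
(* d^2 (e^2 + 1) = e^2 (d^2 + (1 - d)^2) <= e^2 *)
have de : d ^+ 2 * (e ^+ 2 + 1) <= e ^+ 2 by nra.
have q2 : q ^+ 2 <= (e * r) ^+ 2 by rewrite ler_sqr ?nnegrE.
rewrite -[d]ger0_norm ?(ltW d0) // -sqrtr_sqr -sqrtrM ?sqr_ge0 //.
rewrite -[e * r]ger0_norm // -sqrtr_sqr ler_sqrt ?sqr_ge0 //; nra.
Qed.

Lemma decay_gap (R : realFieldType) (e s alpha a : R) : 0 < e -> 2 * e < 1 -> 0 <= s ->
  (1 + 2 * e * s) / (1 - 2 * e) < alpha -> 0 < a ->
  2 * e * (a + s * (a / alpha)) < a - a / alpha.
Proof.
move=> e0 e1 s0; rewrite ltr_pdivrMr ?subr_gt0 // => ha a0.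
have alpha0 : 0 < alpha by nra.
have b0 : 0 < a / alpha by rewrite divr_gt0.
have -> : 2 * e * (a + s * (a / alpha)) = a / alpha * (2 * e * (alpha + s)).
  by field; rewrite gt_eqF.
have -> : a - a / alpha = a / alpha * (alpha - 1) by field; rewrite gt_eqF.
by rewrite ltr_pM2l //; lra.
Qed.

Definition largest_entries (R : realType) n (v : 'cV[R]_n) (A : {set 'I_n}) :=
  forall i k, i \in A -> k \notin A -> `|v k 0| < `|v i 0|.

Lemma largest_entries_sub_supp (R : realType) n (v : 'cV[R]_n) A k :
  largest_entries v A -> k \notin A -> A \subset supp v.
Proof.
by move=> vA kA; apply/subsetP => i iA; rewrite inE -normr_gt0 (le_lt_trans _ (vA i k iA kA)).
Qed.

Lemma largest_entriesU1 (R : realType) n (v : 'cV[R]_n) A j :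
  largest_entries v A -> j \notin A ->
  (forall k, k \notin A -> k != j -> `|v k 0| < `|v j 0|) -> largest_entries v (j |: A).
Proof.
move=> vA jA vj i k; rewrite !in_setU1 negb_or => /predU1P[->|iA] /andP[kj kA].
  exact: vj.
exact: vA.
Qed.

Section Recovery.
Variables (R : realType) (M N K : nat) (Phi : 'M[R]_(M, N)) (delta alpha : R).
Variable x : 'cV[R]_N.
Hypotheses (Phi_rip : RIP Phi K.+1 delta) (delta_lt : delta < 1 / 3).
Hypothesis x_sparse : (l0 x <= K)%N.
Let dp := delta / (1 - delta).
Let s := Num.sqrt (K.-1)%:R : R.
Hypothesis alpha_gt : (1 + 2 * dp * s) / (1 - 2 * dp) < alpha.
Hypothesis x_decay : forall j : nat, (1 <= j)%N -> (j <= K.-1)%N ->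
  alpha * mag_sorted x j <= mag_sorted x j.-1.

Let delta_gt0 : 0 < delta.
Proof. exact: rip_gt0 Phi_rip. Qed.

Let dp_gt0 : 0 < dp.
Proof. by have := delta_lt; have := delta_gt0; rewrite /dp => ? ?; apply: divr_gt0; lra. Qed.

Let dp_lt_half : 2 * dp < 1.
Proof.
have := delta_lt; have := delta_gt0; rewrite /dp => ? ?.
by rewrite mulrA ltr_pdivrMr; lra.
Qed.

Let alpha_gt1 : 1 < alpha.
Proof.
apply: le_lt_trans alpha_gt; rewrite ler_pdivlMr ?subr_gt0 //.
have := dp_gt0; have := dp_lt_half; have : 0 <= s by apply: sqrtr_ge0.
nra.
Qed.

Section Step.
Variables (L : {set 'I_N}) (z : 'cV[R]_N) (js : 'I_N).
Hypotheses (zL : supp z \subset L) (L_largest : largest_entries x L).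
Hypothesis z_orth : forall w, supp w \subset L -> dot (Phi *m w) (Phi *m (x - z)) = 0.
Hypotheses (jsL : js \notin L) (js_max : forall k, k \notin L -> `|x k 0| <= `|x js 0|).
Hypothesis x_js : x js 0 != 0.

Let a := `|x js 0|.

Let a_gt0 : 0 < a.
Proof. by rewrite normr_gt0. Qed.

Let L_supp : L \subset supp x.
Proof. exact: largest_entries_sub_supp L_largest jsL. Qed.

Lemma remaining_entries_decay k : k \notin L -> k != js -> alpha * `|x k 0| <= a.
Proof.
move=> kL kjs; have [->|xk] := eqVneq (x k 0) 0.
  by rewrite normr0 mulr0 ltW.
have kjsL : k \notin js |: L by rewrite in_setU1 negb_or kjs.
have card_jsL : (#|js |: L| < K)%N.
  have : k |: (js |: L) \subset supp x.
    by rewrite !subUset !sub1set !inE xk x_js L_supp.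
  by move/subset_leq_card/leq_trans/(_ x_sparse); rewrite cardsU1 kjsL.
have le_k : `|x k 0| <= mag_sorted x #|js |: L|.
  apply: abs_le_mag_sorted_card => // i; rewrite in_setU1 => /predU1P[->|iL].
    exact: js_max.
  by apply/ltW/L_largest.
have le_a : mag_sorted x #|L| <= a.
  by apply: mag_sorted_card_le => [|i /js_max //]; apply: ltW a_gt0.
have decay : alpha * mag_sorted x #|js |: L| <= mag_sorted x #|L|.
  move: card_jsL (x_decay (j := #|js |: L|)); rewrite cardsU1 jsL add1n => card_jsL.
  by apply => //; rewrite -ltnS (ltn_predK card_jsL).
apply: le_trans le_a; apply: le_trans decay.
by rewrite ler_pM2l // (lt_trans ltr01).
Qed.

Lemma remainder_norm_le : norm2 (restrict (~: L) x) <= a + s * (a / alpha).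
Proof.
set r := restrict (~: L) x.
have b0 : 0 <= a / alpha by rewrite divr_ge0 ?ltW // (lt_trans ltr01).
have small k : k != js -> `|r k 0| <= a / alpha.
  move=> kjs; rewrite /r mxE inE; case: ifP => [kL|_]; last by rewrite normr0.
  by rewrite ler_pdivlMr ?(lt_trans ltr01) // mulrC remaining_entries_decay.
have r_js : r js 0 = x js 0 by rewrite /r mxE inE jsL.
have card : #|supp r :\ js|%:R <= s ^+ 2.
  rewrite /s sqr_sqrtr ?ler0n // ler_nat.
  have js_r : js \in supp r by rewrite inE r_js.
  have : (#|supp r| <= K)%N.
    by apply: leq_trans x_sparse; apply: subset_leq_card; rewrite supp_restrict_sub.
  by rewrite (cardsD1 js) js_r add1n => card_r; rewrite -ltnS (ltn_predK card_r).
have s0 : 0 <= s by apply: sqrtr_ge0.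
have sq_le : sqnorm r <= (a + s * (a / alpha)) ^+ 2.
  apply: le_trans (sqnorm_le_peak (subxx (supp r)) small) _.
  rewrite r_js -[x js 0 ^+ 2]real_normK ?num_real // -/a.
  have -> : (a + s * (a / alpha)) ^+ 2 =
    a ^+ 2 + 2 * (a * (s * (a / alpha))) + s ^+ 2 * (a / alpha) ^+ 2 by ring.
  have := ler_wpM2r (sqr_ge0 (a / alpha)) card.
  have : 0 <= a * (s * (a / alpha)).
    by apply: mulr_ge0; [exact: ltW | exact: mulr_ge0].
  lra.
apply: le_trans (_ : Num.sqrt ((a + s * (a / alpha)) ^+ 2) <= _).
  by rewrite /norm2 ler_sqrt ?sqr_ge0.
rewrite sqrtr_sqr ger0_norm //; apply: addr_ge0; [exact: ltW | exact: mulr_ge0].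
Qed.

Lemma residual_error_le : delta * norm2 (x - z) <= dp * (a + s * (a / alpha)).
Proof.
set u := x - z; set q := restrict L u; set r := restrict (~: L) u.
have rE : r = restrict (~: L) x.
  apply: restrict_eq => i; rewrite inE => iL.
  by rewrite !mxE; have /supp_subP -> := zL; rewrite ?subr0.
have cardT : (#|supp x| <= K.+1)%N by apply: leqW.
have q_le : norm2 q <= dp * norm2 r.
  apply: (rip_orth_split Phi_rip cardT).
  - exact: subset_trans (supp_restrict _ _) L_supp.
  - by rewrite rE supp_restrict_sub.
  - exact: dot_restrictC.
  - by rewrite restrictCK z_orth // supp_restrict.
have u_split : sqnorm u = norm2 q ^+ 2 + norm2 r ^+ 2.
  by rewrite !sqr_norm2 -{1}(restrictCK L u) sqnormD dot_restrictC mulr0 addr0.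
have r_le : norm2 r <= a + s * (a / alpha) by rewrite rE remainder_norm_le.
rewrite /norm2 u_split; apply: le_trans (_ : dp * norm2 r <= _); last first.
  by rewrite ler_pM2l.
apply: mulr_sqrt_sumsqr_le => //; first by rewrite delta_gt0 /=; have := delta_lt; lra.
exact: norm2_ge0.
Qed.

Lemma correlation_peak k : k != js ->
  `|(Phi^T *m (Phi *m x - Phi *m z)) k 0| < `|(Phi^T *m (Phi *m x - Phi *m z)) js 0|.
Proof.
rewrite -mulmxBr; set u := x - z; set h := Phi^T *m (Phi *m u).
set E := delta * norm2 u; set b := a / alpha.
have E0 : 0 <= E by rewrite mulr_ge0 ?norm2_ge0 // ltW.
have b_gt0 : 0 < b by rewrite divr_gt0 // (lt_trans ltr01).
have gap : 2 * E < a - b.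
  apply: le_lt_trans (decay_gap dp_gt0 dp_lt_half (sqrtr_ge0 _) alpha_gt a_gt0).
  by rewrite -mulrA ler_pM2l // residual_error_le.
have u_supp : supp u \subset supp x.
  by apply: supp_subB => //; apply: subset_trans zL L_supp.
have err k' : `|h k' 0 - u k' 0| <= E.
  apply: (rip_gram_entry Phi_rip u_supp).
  by rewrite cardsU1 -add1n leq_add ?leq_b1.
have u_out k' : k' \notin L -> u k' 0 = x k' 0.
  by move=> k'L; rewrite !mxE; have /supp_subP -> := zL; rewrite ?subr0.
have h_js : a - E <= `|h js 0|.
  by have := lerB_dist (x js 0) (h js 0); have := err js; rewrite /a distrC u_out //; lra.
move=> kjs; apply: lt_le_trans h_js; have [kL|kL] := boolP (k \in L).
  have ekL : supp (delta_mx k 0 : 'cV[R]_N) \subset L.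
    by apply: subset_trans (supp_delta_mx _ k) _; rewrite sub1set.
  move: (z_orth ekL); rewrite dot_mulmx dot_delta_mx -/u -/h => ->.
  by rewrite normr0; lra.
have xk : `|x k 0| <= b.
  by rewrite ler_pdivlMr ?(lt_trans ltr01) // mulrC remaining_entries_decay.
by have := lerB_dist (h k 0) (x k 0); have := err k; rewrite u_out //; lra.
Qed.

End Step.

Section Run.
Variables (Lam : nat -> {set 'I_N}) (xs : nat -> 'cV[R]_N).
Hypothesis run : omp_run Phi (Phi *m x) K Lam xs.

Definition omp_invariant l := [/\ supp (xs l) \subset Lam l, (#|Lam l| <= l)%N,
  forall w, supp w \subset Lam l -> dot (Phi *m w) (Phi *m (x - xs l)) = 0 &
  supp x \subset Lam l \/ #|Lam l| = l /\ largest_entries x (Lam l)].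

Lemma omp_invariant0 : omp_invariant 0.
Proof.
case: run => Lam0 [xs0 _]; rewrite /omp_invariant Lam0 xs0 cards0; split => //.
- by apply/supp_subP => i _; rewrite mxE.
- move=> w /supp_subP w0.
  have -> : w = 0 by apply/matrixP => i j; rewrite (ord1 j) mxE w0 // inE.
  by rewrite mulmx0 dot0l.
- by right; split => // i k; rewrite inE.
Qed.

Lemma omp_invariantS l : (l < K)%N -> omp_invariant l -> omp_invariant l.+1.
Proof.
move=> lK [xsL cardL orthL sel]; rewrite /omp_invariant.
case: run => _ [_ /(_ l lK)] /= [j [j_max [-> ls]]].
split.
- by case: ls.
- by rewrite cardsU1 -add1n leq_add ?leq_b1.
- by move=> w wL; rewrite mulmxBr; apply: ls_sol_orth ls wL.
case: sel => [xL|[cardLl largeL]]; first by left; apply: subset_trans xL (subsetUr _ _).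
case: (pickP [pred k | (k \notin Lam l) && (x k 0 != 0)]) => [k0 /andP[k0L xk0]|none];
  last first.
  left; apply/subsetP => i; rewrite inE => xi; rewrite in_setU1; apply/orP; right.
  by apply: contraT => iL; have := none i; rewrite /= iL xi.
case: (@arg_maxP _ _ _ k0 (fun k => k \notin Lam l) (fun k => `|x k 0|) k0L) => js jsL js_max.
have xjs : x js 0 != 0 by rewrite -normr_gt0 (lt_le_trans _ (js_max _ k0L)) ?normr_gt0.
have peak := correlation_peak xsL largeL orthL jsL js_max xjs.
have j_js : j = js.
  by apply/eqP; apply: contraT => jjs; have := peak j jjs; rewrite ltNge j_max.
right; rewrite j_js; split; first by rewrite cardsU1 jsL cardLl.
apply: largest_entriesU1 => // k kL kjs.
have := remaining_entries_decay largeL jsL js_max xjs kL kjs.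
have [->|xk] := eqVneq (x k 0) 0; first by rewrite normr0 normr_gt0.
have xk_gt0 : 0 < `|x k 0| by rewrite normr_gt0.
by have := alpha_gt1; nra.
Qed.

Lemma omp_invariant_all l : (l <= K)%N -> omp_invariant l.
Proof.
elim: l => [_|l IH lK]; first exact: omp_invariant0.
by apply: omp_invariantS => //; apply: IH; apply: ltnW.
Qed.

Lemma omp_recovers : xs K = x.
Proof.
have [xsK cardK orthK sel] := omp_invariant_all (leqnn K).
have xK : supp x \subset Lam K.
  case: sel => [//|[cardLK largeK]]; apply/subsetP => i; rewrite inE => xi.
  apply: contraT => iK; have : i |: Lam K \subset supp x.
    by rewrite subUset sub1set inE xi (largest_entries_sub_supp largeK iK).
  move/subset_leq_card/leq_trans/(_ x_sparse).
  by rewrite cardsU1 iK cardLK ltnn.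
have u_supp := supp_subB xK xsK.
apply/eqP; rewrite eq_sym -subr_eq0; apply/eqP.
apply: (rip_mulmx_eq0 Phi_rip u_supp (leqW cardK)).
by apply/eqP; rewrite -sqnorm_eq0 sqnormE orthK.
Qed.

End Run.
End Recovery.

Theorem theorem2 (R : realType) (M N K : nat) (Phi : 'M[R]_(M, N))
    (delta alpha : R) (x : 'cV[R]_N) :
  (1 <= K)%N ->
  RIP Phi K.+1 delta ->
  delta < 1 / 3 ->
  (l0 x <= K)%N ->
  alpha > (1 + 2 * (delta / (1 - delta)) * Num.sqrt (K.-1)%:R)
          / (1 - 2 * (delta / (1 - delta))) ->
  (forall j : nat, (1 <= j)%N -> (j <= K.-1)%N ->
     mag_sorted x j.-1 >= alpha * mag_sorted x j) ->
  forall (Lam : nat -> {set 'I_N}) (xs : nat -> 'cV[R]_N),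
    omp_run Phi (Phi *m x) K Lam xs ->
    xs K = x.
Proof.
move=> _ rip delta_lt x_sparse alpha_gt x_decay Lam xs run.
exact: (omp_recovers rip delta_lt x_sparse alpha_gt x_decay run).
Qed.
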